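(* Let $Q\subset\mathbb{R}^n$ be compact and controlled invariant. Then $\lim_{\tau\searrow0}h_{\mathrm{rec}}(\tau,Q)=h_{\mathrm{inv}}(Q)$.
   Context: Control system $\dot x=f(x,u)$, $x\in\mathbb R^n$, $f$ locally Lipschitz, controls $u\in\mathcal U$ = piecewise continuous functions $\mathbb R_{\ge0}\to U$, $U\subset\mathbb R^m$ compact; $\xi(x,u,t)$ the solution; $N_\varepsilon(Q)=\{y:\exists x\in Q,\|x-y\|\le\varepsilon\}$; $\log$ base 2. Controlled invariant: for each $x\in Q$ some $u$ keeps $\xi(x,u,t)\in Q$ for all $t\ge0$. $S\subseteq\mathcal U$ is invariance $(T,\varepsilon,Q)$-spanning if for every $x\in Q$ some $u\in S$ has $\xi(x,u,t)\in N_\varepsilon(Q)$ for all $t\in[0,T]$; $r_{\mathrm{inv}}(T,\varepsilon,Q)$ minimal cardinality; $h_{\mathrm{inv}}(Q)=\lim_{\varepsilon\searrow0}\limsup_{T\to\infty}\frac1T\log r_{\mathrm{inv}}(T,\varepsilon,Q)$. A trajectory $\xi(x,u,\cdot)$ is $(T,\varepsilon,\tau,Q)$-recurrent ($T\ge\tau$) if for every $t\in[0,T-\tau]$ there is $t'\in[t,t+\tau]$ with $\xi(x,u,t')\in N_\varepsilon(Q)$. $S$ is recurrence $(T,\varepsilon,\tau,Q)$-spanning if for every $x\in Q$ some $u\in S$ makes $\xi(x,u,\cdot)$ $(T,\varepsilon,\tau,Q)$-recurrent; $r_{\mathrm{rec}}(T,\varepsilon,\tau,Q)$ minimal cardinality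 ($\infty$ if none); $h_{\mathrm{rec}}(\tau,Q)=\lim_{\varepsilon\searrow0}\limsup_{T\to\infty}\frac1T\log r_{\mathrm{rec}}(T,\varepsilon,\tau,Q)$. Standing assumption: for all $x\in Q,u\in\mathcal U$, $\xi(x,u,\cdot)$ is defined on $[0,\tau]$ and continuous in $x$. *)

From HB Require Import structures.
From mathcomp Require Import all_boot all_order all_algebra.
From mathcomp Require Import all_classical all_reals all_analysis.
Set Implicit Arguments. Unset Strict Implicit. Unset Printing Implicit Defensive.
Import Order.TTheory GRing.Theory Num.Theory.
Import numFieldNormedType.Exports.
Local Open Scope classical_set_scope.
Local Open Scope ring_scope.

Section ControlEntropy.
Variables (R : realType) (n m : nat).

Definition enorm (k : nat) (v : 'rV[R]_k) : R :=
  Num.sqrt (\sum_(i < k) (v ord0 i) ^+ 2).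

Definition locally_lipschitz (f : 'rV[R]_n -> 'rV[R]_m -> 'rV[R]_n) : Prop :=
  forall (x0 : 'rV[R]_n) (u0 : 'rV[R]_m), exists delta : R, exists L : R,
    0 < delta /\
    forall x y u v, enorm (x - x0) <= delta -> enorm (y - x0) <= delta ->
      enorm (u - u0) <= delta -> enorm (v - u0) <= delta ->
      enorm (f x u - f y v) <= L * (enorm (x - y) + enorm (u - v)).

(* piecewise continuous on R_{>=0}: on every [0,T] there is a finite partition
   0 = s_0 < ... < s_k = T such that on each open piece ]s_i, s_{i+1}[ the
   function agrees with a continuous function (hence is continuous there and
   has finite one-sided limits at the partition points) *)
Definition piecewise_continuous (u : R -> 'rV[R]_m) : Prop :=
  forall T : R, 0 < T -> exists (k : nat) (s : nat -> R),
    s 0%N = 0 /\ s k = T /\ (forall i, (i < k)%N -> s i < s i.+1) /\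
    forall i, (i < k)%N -> exists g : R -> 'rV[R]_m, continuous g /\
      forall t, s i < t < s i.+1 -> u t = g t.

(* admissible controls: piecewise continuous functions R_{>=0} -> U
   (values at negative times are irrelevant) *)
Definition admissible (U : set 'rV[R]_m) (u : R -> 'rV[R]_m) : Prop :=
  piecewise_continuous u /\ forall t, 0 <= t -> U (u t).

Definition is_sol (f : 'rV[R]_n -> 'rV[R]_m -> 'rV[R]_n) (x : 'rV[R]_n)
  (u : R -> 'rV[R]_m) (T : R) (phi : R -> 'rV[R]_n) : Prop :=
  {within `[0, T], continuous phi} /\
  forall t, 0 <= t <= T -> forall i : 'I_n,
    phi t ord0 i = x ord0 i
      + \int[@lebesgue_measure R]_(s in `[0, t]) (f (phi s) (u s) ord0 i).

Definition nbhd_set (eps : R) (Q : set 'rV[R]_n) : set 'rV[R]_n :=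
  [set y | exists2 x, Q x & enorm (x - y) <= eps].

Definition controlled_invariant (f : 'rV[R]_n -> 'rV[R]_m -> 'rV[R]_n)
  (U : set 'rV[R]_m) (Q : set 'rV[R]_n) : Prop :=
  forall x, Q x -> exists u, admissible U u /\ exists phi : R -> 'rV[R]_n,
    (forall T, 0 <= T -> is_sol f x u T phi) /\ forall t, 0 <= t -> Q (phi t).

Definition stays_near f (x : 'rV[R]_n) u (T eps : R) Q : Prop :=
  exists phi, is_sol f x u T phi /\
    forall t, 0 <= t <= T -> nbhd_set eps Q (phi t).

Definition recurrent f (x : 'rV[R]_n) u (T eps tau : R) Q : Prop :=
  exists phi, is_sol f x u T phi /\
    forall t, 0 <= t <= T - tau ->
      exists2 t', t <= t' <= t + tau & nbhd_set eps Q (phi t').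

Local Open Scope ereal_scope.

(* minimal cardinality of a finite family of admissible controls with property
   P (for each x in Q some member works); +oo if there is none *)
Definition min_card (U : set 'rV[R]_m) (Q : set 'rV[R]_n)
  (P : 'rV[R]_n -> (R -> 'rV[R]_m) -> Prop) : \bar R :=
  ereal_inf [set (k%:R)%:E | k in
    [set k : nat | exists us : 'I_k -> (R -> 'rV[R]_m),
       (forall j, admissible U (us j)) /\
       forall x, Q x -> exists j, P x (us j)]].

Definition r_inv f U (T eps : R) Q : \bar R :=
  min_card U Q (fun x u => stays_near f x u T eps Q).

Definition r_rec f U (T eps tau : R) Q : \bar R :=
  min_card U Q (fun x u => recurrent f x u T eps tau Q).

Definition elog2 (r : \bar R) : \bar R :=
  match r with
  | r'%:E => if (r' <= 0)%R then -oo else ((ln r' / ln 2)%R)%:E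
  | +oo => +oo
  | -oo => -oo
  end.

Definition limsup_T (g : R -> \bar R) : \bar R := limf_esup g (pinfty_nbhs R).

Definition h_inv f U Q : \bar R :=
  lim ((fun eps => limsup_T (fun T => (T^-1)%:E * elog2 (r_inv f U T eps Q)))
         @ 0^'+).

Definition h_rec f U (tau : R) Q : \bar R :=
  lim ((fun eps =>
          limsup_T (fun T => (T^-1)%:E * elog2 (r_rec f U T eps tau Q)))
         @ 0^'+).

End ControlEntropy.

From HB Require Import structures.
From mathcomp Require Import all_boot all_order all_algebra.
From mathcomp Require Import all_classical all_reals all_analysis.
From mathcomp Require Import ring lra measurable_realfun.
Import Order.TTheory GRing.Theory Num.Theory.
Import numFieldNormedType.Exports.
Local Open Scope classical_set_scope.
Local Open Scope ring_scope.

(* All entropies involved are limits of monotone quantities, hence suprema: h_inv is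
   the supremum over eps of the growth rate of r_inv(., eps), h_rec(tau) the supremum
   over eps of that of r_rec(., eps, tau), and tau |-> h_rec(tau) is nonincreasing, so
   its limit at 0+ is its supremum.  Staying in N_eps(Q) implies recurrence, so
   h_rec(tau) <= h_inv.  Conversely, if Q lies in the ball of radius M, the vector
   field is bounded, by B say, on the compact set {|y| <= M + 3e} x U, so as long as a
   trajectory stays in N_2e(Q) it moves at most n B tau in time tau.  For
   tau < e / (n B + 1), a (T, e, tau, Q)-recurrent trajectory, which visits N_e(Q) at
   least once every tau, therefore never leaves N_2e(Q); hence
   r_inv(T, 2e) <= r_rec(T, e, tau) and h_inv <= sup_tau h_rec(tau). *)

Section EuclideanNorm.
Context {R : realType} {k : nat}.
Implicit Types v w : 'rV[R]_k.

Let sum_sqr_ge0 v : 0 <= \sum_(i < k) v ord0 i ^+ 2.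
Proof. by apply: sumr_ge0 => i _; exact: sqr_ge0. Qed.

Lemma enorm_ge0 v : 0 <= enorm v.
Proof. exact: sqrtr_ge0. Qed.

Lemma enorm_sqr v : enorm v ^+ 2 = \sum_(i < k) v ord0 i ^+ 2.
Proof. by rewrite sqr_sqrtr ?sum_sqr_ge0. Qed.

Lemma enorm0 : enorm (0 : 'rV[R]_k) = 0.
Proof. by rewrite /enorm big1 ?sqrtr0 // => i _; rewrite mxE expr0n. Qed.

Lemma enormN v : enorm (- v) = enorm v.
Proof. by rewrite /enorm; congr Num.sqrt; apply: eq_bigr => i _; rewrite mxE sqrrN. Qed.

Lemma enormB v w : enorm (v - w) = enorm (w - v).
Proof. by rewrite -enormN opprB. Qed.

Lemma enorm_eq0_entry {v} : enorm v = 0 -> forall i, v ord0 i = 0.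
Proof.
move=> v0 i; have := enorm_sqr v; rewrite v0 expr0n /= => /esym/eqP.
rewrite psumr_eq0 => [/allP/(_ i (mem_index_enum i))|j _]; last exact: sqr_ge0.
by rewrite /= sqrf_eq0 => /eqP.
Qed.

Lemma ler_entry_enorm v i : `|v ord0 i| <= enorm v.
Proof.
rewrite -(ler_pXn2r (_ : 0 < 2)%N) ?nnegrE ?enorm_ge0 // real_normK ?num_real //.
by rewrite enorm_sqr (bigD1 i) //= lerDl; apply: sumr_ge0 => j _; exact: sqr_ge0.
Qed.

Lemma enorm_le_sum v : enorm v <= \sum_(i < k) `|v ord0 i|.
Proof.
rewrite -(ler_pXn2r (_ : 0 < 2)%N) ?nnegrE ?enorm_ge0 ?sumr_ge0 // enorm_sqr.
rewrite expr2 mulr_suml; apply: ler_sum => i _.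
rewrite -real_normK ?num_real // expr2 ler_wpM2l //.
by rewrite (bigD1 i) //= lerDl; exact: sumr_ge0.
Qed.

Lemma ler_entry_norm v i : `|v ord0 i| <= `|v|.
Proof.
by rewrite [leRHS]/Num.norm /= mx_normrE; apply/bigmax_geP; right; exists (ord0, i).
Qed.

Lemma ler_norm_enorm v : `|v| <= enorm v.
Proof.
rewrite [leLHS]/Num.norm /= mx_normrE; apply/bigmax_leP; split; first exact: enorm_ge0.
by case=> i j _ /=; rewrite (ord1 i); exact: ler_entry_enorm.
Qed.

Lemma ler_enorm_norm v : enorm v <= k%:R * `|v|.
Proof.
apply: le_trans (enorm_le_sum v) _.
rewrite mulr_natl -[k in _ *+ k]card_ord -sumr_const; apply: ler_sum => i _.
exact: ler_entry_norm.
Qed.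

(* Cauchy-Schwarz: sum [2 A B a_i b_i <= (B a_i)^2 + (A b_i)^2] over i. *)
Lemma dot_le_enorm v w :
  \sum_(i < k) v ord0 i * w ord0 i <= enorm v * enorm w.
Proof.
set A := enorm v; set B := enorm w.
have [A0|Aneq0] := eqVneq A 0.
  by rewrite A0 mul0r big1 // => i _; rewrite (enorm_eq0_entry A0) mul0r.
have [B0|Bneq0] := eqVneq B 0.
  by rewrite B0 mulr0 big1 // => i _; rewrite (enorm_eq0_entry B0) mulr0.
have AB0 : 0 < 2 * (A * B).
  by rewrite !mulr_gt0 // lt_def ?Aneq0 ?Bneq0 enorm_ge0.
have : \sum_(i < k) 2 * (A * B) * (v ord0 i * w ord0 i)
    <= \sum_(i < k) (B ^+ 2 * v ord0 i ^+ 2 + A ^+ 2 * w ord0 i ^+ 2).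
  apply: ler_sum => i _; rewrite -subr_ge0.
  by rewrite (_ : _ - _ = (B * v ord0 i - A * w ord0 i) ^+ 2) ?sqr_ge0 //; ring.
rewrite -mulr_sumr big_split /= -!mulr_sumr -!enorm_sqr -/A -/B.
by rewrite (_ : _ + _ = 2 * (A * B) * (A * B)) ?ler_pM2l //; ring.
Qed.

Lemma enormD v w : enorm (v + w) <= enorm v + enorm w.
Proof.
rewrite -(ler_pXn2r (_ : 0 < 2)%N) ?nnegrE ?addr_ge0 ?enorm_ge0 //.
rewrite sqrrD !enorm_sqr.
have -> : \sum_(i < k) (v + w) ord0 i ^+ 2 = \sum_(i < k) v ord0 i ^+ 2
    + (\sum_(i < k) v ord0 i * w ord0 i) *+ 2 + \sum_(i < k) w ord0 i ^+ 2.
  by rewrite -sumrMnl -!big_split /=; apply: eq_bigr => i _; rewrite mxE sqrrD.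
by rewrite lerD2r lerD2l lerMn2r /= dot_le_enorm.
Qed.

Lemma enorm_triangle (a b c : 'rV[R]_k) :
  enorm (a - c) <= enorm (a - b) + enorm (b - c).
Proof. by have := enormD (a - b) (b - c); rewrite addrA subrK. Qed.

Lemma near_enorm (x0 : 'rV[R]_k) (r : R) : 0 < r ->
  \forall y \near x0, enorm (y - x0) <= r.
Proof.
move=> r0; have k1 : 0 < k%:R + 1 :> R by rewrite ltr_wpDl.
near=> y; apply: le_trans (ler_enorm_norm _) _.
have : `|y - x0| <= r / (k%:R + 1).
  by near: y; apply: cvgr_distC_le; [exact: cvg_id | rewrite divr_gt0].
move=> /(ler_wpM2l (ler0n _ k)) /le_trans; apply.
rewrite mulrA ler_pdivrMr //; nra.
Unshelve. all: by end_near. Qed.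

End EuclideanNorm.

Lemma compact_norm_bound {R : realType} {V : normedModType R} {A : set V} :
  compact A -> exists2 M : R, 0 < M & forall a, A a -> `|a| <= M.
Proof.
move=> /compact_bounded [M [_ HM]]; exists (`|M| + 1); first by rewrite ltr_wpDl.
by move=> a Aa; apply: (HM (`|M| + 1)) => //; rewrite (le_lt_trans (ler_norm M)) ?ltrDl.
Qed.

Lemma continuous_within_enorm {R : realType} {k : nat} {D : set R}
    {phi : R -> 'rV[R]_k} {r eps : R} :
  {within D, continuous phi} -> D r -> 0 < eps ->
  exists2 d, 0 < d & forall s, D s -> `|r - s| < d -> enorm (phi s - phi r) <= eps.
Proof.
move=> /subspace_continuousP phi_cont Dr eps0.
have : \forall s \near within D (nbhs r), enorm (phi s - phi r) <= eps.
  exact: phi_cont Dr _ (near_enorm _ _ eps0).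
by rewrite near_withinE => /nbhs_ballP [d /= d0 Hd]; exists d => // s Ds /Hd; apply.
Qed.

Lemma real_induction {R : realType} (a b : R) (P : R -> Prop) :
  P a ->
  (forall r, a <= r <= b -> P r ->
    exists2 d, 0 < d & forall s, r <= s <= b -> s < r + d -> P s) ->
  (forall r, a < r <= b -> (forall s, a <= s < r -> P s) -> P r) ->
  forall r, a <= r <= b -> P r.
Proof.
move=> Pa P_right P_left r rab; apply: contrapT => nPr.
pose A := [set s | a <= s <= b /\ ~ P s].
have A_lb : has_lbound A by exists a => s [/andP[]].
have Ar : A r by [].
have A_inf : has_inf A by split => //; exists r.
have ac : a <= inf A by apply: lb_le_inf => [|s [/andP[]]]; first by exists r.
have cb : inf A <= b by case/andP: rab => _; apply: le_trans (ge_inf A_lb Ar).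
have P_before s : a <= s < inf A -> P s.
  move=> /andP[a_s sc]; apply: contrapT => nPs.
  have As : A s by split => //; rewrite a_s (le_trans (ltW sc)).
  by rewrite ltNge ge_inf in sc.
have Pc : P (inf A).
  have [ca|] := eqVneq (inf A) a; first by rewrite ca.
  by rewrite neq_lt ltNge ac /= => ac'; apply: P_left => //; rewrite ac'.
have [d d0 Pd] := P_right _ (introT andP (conj ac cb)) Pc.
have [s As sc] := inf_adherent d0 A_inf.
case: (As) => /andP[_ sb]; apply; apply: Pd => //.
by rewrite sb (ge_inf A_lb As).
Qed.

Lemma partition_cover {R : realType} (s : nat -> R) (k : nat) (r : R) :
  (0 < k)%N -> s 0%N <= r <= s k -> exists2 j, (j < k)%N & s j <= r <= s j.+1.
Proof.
elim: k => [//|[_ _ r0k|k IHk _ /andP[r0 rk]]]; first by exists 0%N.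
have [rk1|rk1] := leP r (s k.+1); last by exists k.+1 => //; rewrite (ltW rk1).
by have [|j jk ?] := IHk isT; [rewrite r0 | exists j => //; rewrite ltnS ltnW].
Qed.

Section Integration.
Context {R : realType}.
Notation mu := (@lebesgue_measure R).

Lemma lebesgue_measure_itv_oc {a b : R} : a <= b -> mu `]a, b] = (b - a)%:E.
Proof.
rewrite lebesgue_measure_itv /= lte_fin le_eqVlt => /predU1P[->|->] //.
by rewrite ltxx subrr.
Qed.

Lemma norm_Rintegral_itv_le (g : R -> R) (a b B : R) : a <= b ->
  mu.-integrable `]a, b] (EFin \o g) -> (forall s, a < s <= b -> `|g s| <= B) ->
  `|\int[mu]_(s in `]a, b]) g s| <= B * (b - a).
Proof.
move=> ab g_int gB.
have cst_int : mu.-integrable `]a, b] (EFin \o cst B).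
  apply: measurable_bounded_integrable; [exact: measurable_itv| |by []|].
    by have := lebesgue_measure_itv_oc ab; rewrite /= => ->; rewrite ltry.
  exact: bounded_cst.
apply: le_trans (le_normr_Rintegral _ g_int) _; first exact: measurable_itv.
apply: le_trans (le_Rintegral _ (integrable_norm g_int) cst_int _) _.
- exact: measurable_itv.
- by move=> s; rewrite /= in_itv /= => /gB.
by rewrite Rintegral_cst //; have := lebesgue_measure_itv_oc ab; rewrite /= => ->.
Qed.

End Integration.

Section GrowthRate.
Context {R : realType}.
Local Open Scope ereal_scope.

Lemma le_elog2 (a b : \bar R) : a <= b -> elog2 a <= elog2 b.
Proof.
case: a b => [r| |] [s| |] //=; rewrite ?leey ?leNye // lee_fin => rs.
case: ifPn => [_|r0]; first by rewrite leNye.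
have s0 : (0 < s)%R by rewrite (lt_le_trans _ rs) // ltNge.
rewrite ifN -?ltNge // lee_fin ler_wpM2r ?invr_ge0 ?ln_ge0 ?ler1n //.
by rewrite ler_ln // posrE ltNge.
Qed.

Lemma le_limf_esup (F : set_system R) {FF : Filter F} (g h : R -> \bar R) :
  (\forall x \near F, g x <= h x) -> limf_esup g F <= limf_esup h F.
Proof.
move=> gh; apply: le_ereal_inf_tmp => _ [V FV <-].
apply: ereal_inf_le; exists (ereal_sup (g @` ([set x | g x <= h x] `&` V))).
  by exists ([set x | g x <= h x] `&` V) => //; exact: filterI.
apply: ge_ereal_sup => _ [x [ghx Vx] <-]; apply: le_trans ghx _.
by apply: ereal_sup_ubound; exists x.
Qed.

Definition growth_rate (r : R -> \bar R) : \bar R :=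
  limsup_T (fun T => (T^-1)%:E * elog2 (r T)).

Lemma le_growth_rate (r1 r2 : R -> \bar R) :
  (forall T, (0 < T)%R -> r1 T <= r2 T) -> growth_rate r1 <= growth_rate r2.
Proof.
move=> r12; apply: le_limf_esup; exists 0%R; split => // T /= T0.
by apply: lee_wpmul2l; [rewrite lee_fin invr_ge0 ltW | apply/le_elog2/r12].
Qed.

Lemma nonincreasing_cvg_at_right0 (g : R -> \bar R) :
  {in `]0%R, +oo[ &, nonincreasing_fun g} ->
  g x @[x --> 0%R^'+] --> ereal_sup (g @` `]0%R, +oo[).
Proof. exact: nonincreasing_at_right_cvge. Qed.

End GrowthRate.

Section ControlSystem.
Context {R : realType} {n m : nat} {f : 'rV[R]_n -> 'rV[R]_m -> 'rV[R]_n}.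
Context {U : set 'rV[R]_m} {Q : set 'rV[R]_n}.
Hypotheses (f_lip : locally_lipschitz f) (U_compact : compact U).
Hypothesis Q_compact : compact Q.
Notation mu := (@lebesgue_measure R).

Lemma locally_lipschitz_continuous : continuous (fun p => f p.1 p.2).
Proof.
move=> [x0 u0]; have [d [L [d0 Lip]]] := f_lip x0 u0.
apply/cvgrPdist_le => e e0.
have L1 : 0 < `|L| + 1 by rewrite ltr_wpDl.
set r := Num.min d (e / (2 * (`|L| + 1))).
have r0 : 0 < r by rewrite lt_min d0 divr_gt0 ?mulr_gt0.
have rd : r <= d by rewrite ge_min lexx.
have Lr : `|L| * (2 * r) <= e.
  have : r * (2 * (`|L| + 1)) <= e.
    by rewrite -ler_pdivlMr ?mulr_gt0 // ge_min lexx orbT.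
  apply: le_trans; have := normr_ge0 L; nra.
have near_x : \forall p \near (x0, u0), enorm (p.1 - x0) <= r.
  exact: cvg_fst (near_enorm x0 _ r0).
have near_u : \forall p \near (x0, u0), enorm (p.2 - u0) <= r.
  exact: cvg_snd (near_enorm u0 _ r0).
apply: filterS2 near_x near_u => -[x u] /= px pu; rewrite distrC.
have x0d : enorm (x0 - x0) <= d by rewrite subrr enorm0 ltW.
have u0d : enorm (u0 - u0) <= d by rewrite subrr enorm0 ltW.
have Lp := Lip x x0 u u0 (le_trans px rd) x0d (le_trans pu rd) u0d.
apply: le_trans (ler_norm_enorm _) (le_trans Lp _).
apply: le_trans Lr.
apply: le_trans (ler_wpM2r (addr_ge0 (enorm_ge0 _) (enorm_ge0 _)) (ler_norm L)) _.
by rewrite ler_wpM2l // mulr_natl mulr2n lerD.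
Qed.

Lemma locally_lipschitz_bounded {rad : R} : 0 < rad -> exists2 B : R, 0 <= B &
  forall y w, `|y| <= rad -> U w -> forall i, `|f y w ord0 i| <= B.
Proof.
move=> rad0; set K := closed_ball (0 : 'rV[R]_n) rad.
have KE : K = [set y | `|y| <= rad].
  rewrite /K closed_ballE //; apply/seteqP.
  by split => y; rewrite /closed_ball_ /= sub0r normrN.
have K_compact : compact K.
  apply: bounded_closed_compact; last exact: closed_ball_closed.
  rewrite KE; exists rad; split => [|M radM y /= yr]; first exact: num_real.
  exact: le_trans yr (ltW radM).
have fKU := continuous_compact (continuous_subspaceT locally_lipschitz_continuous)
  (compact_setX K_compact U_compact).
have [B B0 HB] := compact_norm_bound fKU.
exists B; first exact: ltW.
move=> y w yr Uw i; apply: le_trans (ler_entry_norm _ i) (HB _ _).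
by exists (y, w) => //; split => //; rewrite KE.
Qed.

Lemma continuous_within_field (D : set R) (phi : R -> 'rV[R]_n) (g : R -> 'rV[R]_m) i :
  {within D, continuous phi} -> continuous g ->
  {within D, continuous (fun s => f (phi s) (g s) ord0 i)}.
Proof.
move=> /subspace_continuousP phi_cont g_cont; apply/subspace_continuousP => t Dt.
have g_t : g @ within D (nbhs t) --> g t.
  by move/subspace_continuousP : (@continuous_subspaceT _ _ D _ g_cont); apply.
have fg_t : (fun s => f (phi s) (g s)) @ within D (nbhs t) --> f (phi t) (g t).
  apply: cvg_comp (cvg_pair (phi_cont t Dt) g_t)
    (locally_lipschitz_continuous (phi t, g t)).
exact: cvg_comp fg_t (@coord_continuous R 1 n ord0 i _).
Qed.

Lemma measurable_fun_field_piece (D : set R) (phi : R -> 'rV[R]_n) (u g : R -> 'rV[R]_m)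
    (a b : R) i :
  measurable D -> {within D, continuous phi} -> continuous g ->
  (forall t, a < t < b -> u t = g t) ->
  measurable_fun (`[a, b] `&` D) (fun s => f (phi s) (u s) ord0 i).
Proof.
move=> mD phi_cont g_cont ug.
have mE : measurable (`]a, b[ `&` D) by exact: measurableI.
apply: (measurable_funS (E := (`]a, b[ `&` D) `|` [set a] `|` [set b])).
- by apply: measurableU => //; apply: measurableU.
- move=> t [/= tab Dt]; have [->|ta] := eqVneq t a; first by left; right.
  have [->|tb] := eqVneq t b; first by right.
  by left; left; split => //=; rewrite in_itv /= !lt_neqAle eq_sym ta tb -!andbA.
apply/measurable_funU => //; first exact: measurableU.
split; last exact: measurable_fun_set1.
apply/measurable_funU => //; split; last exact: measurable_fun_set1.
apply: subspace_continuous_measurable_fun => //.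
apply: (@subspace_eq_continuous _ _ _ (fun s => f (phi s) (g s) ord0 i)).
  by move=> t; rewrite inE => -[/=]; rewrite in_itv /= => /ug ->.
apply: continuous_within_field => //.
exact: continuous_subspaceW (@subIsetr _ `]a, b[ D) phi_cont.
Qed.

Lemma measurable_fun_field (phi : R -> 'rV[R]_n) (u : R -> 'rV[R]_m) (T : R) i :
  0 < T -> piecewise_continuous u -> {within `[0, T], continuous phi} ->
  measurable_fun `[0, T] (fun s => f (phi s) (u s) ord0 i).
Proof.
move=> T0 /(_ T T0) [k [s [s0 [sT [_ pieces]]]]] phi_cont.
have k0 : (0 < k)%N by case: k sT {pieces} => // sT; move: T0; rewrite -sT s0 ltxx.
pose E j := if (j < k)%N then `[s j, s j.+1] `&` `[0, T] else set0.
have mE j : measurable (E j).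
  by rewrite /E; case: ifP => _; [apply: measurableI | exact: measurable0].
apply: (measurable_funS (E := \bigcup_j E j)).
- exact: bigcup_measurable.
- move=> r /=; rewrite in_itv /= => rT.
  have [|j jk sj] := partition_cover s k r k0; first by rewrite s0 sT.
  by exists j => //; rewrite /E jk; split; rewrite /= in_itv.
apply/measurable_fun_bigcup => // j; rewrite /E; case: ifP => jk.
  have [g [g_cont ug]] := pieces j jk.
  exact: measurable_fun_field_piece.
exact: measurable_fun_set0.
Qed.

Lemma integrable_field {phi : R -> 'rV[R]_n} {u : R -> 'rV[R]_m} {T : R} i :
  0 < T -> admissible U u -> {within `[0, T], continuous phi} ->
  mu.-integrable `[0, T] (EFin \o (fun s => f (phi s) (u s) ord0 i)).
Proof.
move=> T0 [u_pc u_U] phi_cont.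
apply: measurable_bounded_integrable; first exact: measurable_itv.
- by have := lebesgue_measure_itv `[0, T]; rewrite /= => ->; rewrite lte_fin T0 ltry.
- exact: measurable_fun_field.
have [M M0 phiM] :=
  compact_norm_bound (continuous_compact phi_cont (@segment_compact R 0 T)).
have [B B0 fB] := locally_lipschitz_bounded M0.
exists B; split; first exact: num_real.
move=> B' BB' r; rewrite /= in_itv /= => /andP[r0 rT].
apply: le_trans (fB _ _ _ (u_U _ r0) i) (ltW BB').
by apply: phiM; exists r => //=; rewrite in_itv /= r0.
Qed.

Lemma solution_start {x : 'rV[R]_n} {u : R -> 'rV[R]_m} {T : R} {phi} :
  0 <= T -> is_sol f x u T phi -> phi 0 = x.
Proof.
move=> T0 [_ phi_sol]; apply/rowP => i.
by rewrite phi_sol ?lexx ?T0 // set_itv1 Rintegral_set1 addr0.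
Qed.

Lemma solution_increment_le {x : 'rV[R]_n} {u : R -> 'rV[R]_m} {T : R} {phi}
    {a b B : R} :
  0 < T -> admissible U u -> is_sol f x u T phi -> 0 <= a -> a <= b -> b <= T ->
  (forall s, a < s <= b -> forall i, `|f (phi s) (u s) ord0 i| <= B) ->
  enorm (phi b - phi a) <= n%:R * B * (b - a).
Proof.
move=> T0 u_adm [phi_cont phi_sol] a0 ab bT fB.
have b0 : 0 <= b by exact: le_trans ab.
apply: le_trans (enorm_le_sum _) _.
rewrite -mulrA mulr_natl -[n in _ *+ n]card_ord -sumr_const; apply: ler_sum => i _.
have f_int D : measurable D -> D `<=` `[0, T] ->
    mu.-integrable D (EFin \o (fun s => f (phi s) (u s) ord0 i)).
  by move=> mD DT; apply: integrableS (integrable_field i T0 u_adm phi_cont).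
rewrite !mxE phi_sol ?b0 ?bT // phi_sol ?a0 ?(le_trans ab bT) //.
rewrite opprD addrACA subrr add0r.
rewrite (@Rintegral_itvB R (fun s => f (phi s) (u s) ord0 i) (BLeft 0) (BRight b) a) //.
  apply: norm_Rintegral_itv_le => //; last by move=> s sab; exact: fB.
  apply: f_int; first exact: measurable_itv.
  move=> s /=; rewrite !in_itv /= => /andP[/ltW/(le_trans a0) -> sb].
  by rewrite (le_trans sb).
apply: f_int; first exact: measurable_itv.
by move=> s /=; rewrite !in_itv /= => /andP[-> sb]; rewrite (le_trans sb).
Qed.

Lemma solution_drift_lt {x : 'rV[R]_n} {u : R -> 'rV[R]_m} {T : R} {phi}
    {a b e B : R} :
  0 < T -> admissible U u -> is_sol f x u T phi -> 0 <= a -> b <= T ->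
  0 < e -> 0 <= B -> n%:R * B * (b - a) < e ->
  (forall y w, `|y| <= `|phi a| + 2 * e -> U w -> forall i, `|f y w ord0 i| <= B) ->
  forall r, a <= r <= b -> enorm (phi r - phi a) < e.
Proof.
move=> T0 u_adm phi_sol a0 bT e0 B0 drift_e fB.
have in_T s : a <= s <= b -> [set` `[0, T]] s.
  by move=> /andP[? ?]; rewrite /= in_itv /=; apply/andP; lra.
have near_a y : enorm (y - phi a) < 2 * e -> `|y| <= `|phi a| + 2 * e.
  move=> ya; rewrite -[y](subrK (phi a)) (le_trans (ler_normD _ _)) // addrC lerD2l.
  exact: le_trans (ler_norm_enorm _) (ltW ya).
apply: (real_induction a b (fun r => enorm (phi r - phi a) < e))
  => [|r rab Pr|r /andP[ar rb] before].
- by rewrite subrr enorm0.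
- have gap : 0 < (e - enorm (phi r - phi a)) / 2 by rewrite divr_gt0 ?subr_gt0.
  have [d d0 Hd] := continuous_within_enorm phi_sol.1 (in_T r rab) gap.
  exists d => // s /andP[rs sb] srd.
  have rs_d : `|r - s| < d by rewrite distrC ger0_norm ?subr_ge0 //; lra.
  have s_in : a <= s <= b by case/andP: rab => ar _; apply/andP; lra.
  have := Hd s (in_T s s_in) rs_d.
  have := enorm_triangle (phi s) (phi r) (phi a); lra.
(* Approaching r from the left shows that phi r is still within 2e of phi a, so the
   speed bound holds on all of ]a, r]. *)
have r_in : a <= r <= b by rewrite (ltW ar) rb.
have [d d0 Hd] := continuous_within_enorm phi_sol.1 (in_T r r_in) e0.
pose s := Num.max a (r - d / 2).
have a_s : a <= s by rewrite le_max lexx.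
have s_r : s < r by rewrite gt_max ar /= ltrBlDr ltrDl divr_gt0.
have r_s : r - d / 2 <= s by rewrite le_max lexx orbT.
have r_close : enorm (phi r - phi a) < 2 * e.
  have rs_d : `|r - s| < d by rewrite ger0_norm ?subr_ge0; lra.
  have := Hd s (in_T s (introT andP (conj a_s (le_trans (ltW s_r) rb)))) rs_d.
  have := before s (introT andP (conj a_s s_r)).
  have := enorm_triangle (phi r) (phi s) (phi a); rewrite (enormB (phi r) (phi s)); lra.
have f_bounded v : a < v <= r -> forall i, `|f (phi v) (u v) ord0 i| <= B.
  move=> /andP[av vr]; apply: fB; last exact: u_adm.2 _ (le_trans a0 (ltW av)).
  apply: near_a; have [v_r|r_v] := ltP v r; last by rewrite (@le_anti _ _ v r) ?vr.
  by have := before v (introT andP (conj (ltW av) v_r)); lra.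
have := solution_increment_le T0 u_adm phi_sol a0 (ltW ar) (le_trans rb bT) f_bounded.
have : n%:R * B * (r - a) <= n%:R * B * (b - a) by rewrite ler_wpM2l ?mulr_ge0 //; lra.
lra.
Qed.

Lemma recurrent_visit_before {x : 'rV[R]_n} {u : R -> 'rV[R]_m} {T e tau : R} {phi} :
  0 <= T -> 0 <= tau -> 0 <= e -> Q x -> is_sol f x u T phi ->
  (forall t, 0 <= t <= T - tau ->
    exists2 t', t <= t' <= t + tau & nbhd_set e Q (phi t')) ->
  forall t, 0 <= t <= T -> exists2 t', 0 <= t' <= t &
    t - t' <= tau /\ nbhd_set e Q (phi t').
Proof.
move=> T0 tau0 e0 Qx phi_sol phi_rec t /andP[t0 tT]; have [tau_t|t_tau] := leP tau t.
  have [|s /andP[s_ge s_le] Ns] := phi_rec (t - tau); first by apply/andP; lra.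
  by exists s; [apply/andP; lra | split => //; lra].
exists 0; first by rewrite lexx t0.
split; first by lra.
by exists x => //; rewrite (solution_start T0 phi_sol) subrr enorm0.
Qed.

Lemma recurrent_stays_near {e : R} : 0 < e -> exists2 delta : R, 0 < delta &
  forall tau T x u, 0 < tau -> tau <= delta -> 0 < T -> Q x -> admissible U u ->
  recurrent f x u T e tau Q -> stays_near f x u T (2 * e) Q.
Proof.
move=> e0; have [MQ MQ0 QM] := compact_norm_bound Q_compact.
have rad0 : 0 < MQ + 3 * e by rewrite addr_gt0 ?mulr_gt0.
have [B B0 fB] := locally_lipschitz_bounded rad0.
have nB1 : 0 < n%:R * B + 1 by rewrite ltr_wpDl ?mulr_ge0.
exists (e / (n%:R * B + 1)); first by rewrite divr_gt0.
move=> tau T x u tau0 tau_delta T0 Qx u_adm [phi [phi_sol phi_rec]].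
exists phi; split => // t tT.
have [t' /andP[t'0 t't] [t_t' [q Qq q_t']]] :=
  recurrent_visit_before (ltW T0) (ltW tau0) (ltW e0) Qx phi_sol phi_rec t tT.
have phi_t' : `|phi t'| <= MQ + e.
  rewrite -[phi t'](subrK q) (le_trans (ler_normD _ _)) // addrC lerD ?QM //.
  by rewrite (le_trans (ler_norm_enorm _)) // enormB.
have drift : n%:R * B * (t - t') < e.
  have : tau * (n%:R * B + 1) <= e by rewrite -ler_pdivlMr.
  have : n%:R * B * (t - t') <= n%:R * B * tau by rewrite ler_wpM2l ?mulr_ge0.
  nra.
have fB' y w : `|y| <= `|phi t'| + 2 * e -> U w -> forall i, `|f y w ord0 i| <= B.
  by move=> y_le; apply: fB; lra.
have := solution_drift_lt T0 u_adm phi_sol t'0 (proj2 (andP tT)) e0 B0 drift fB' t.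
rewrite t't lexx => /(_ isT) phi_t.
exists q => //; have := enorm_triangle q (phi t') (phi t).
by rewrite (enormB (phi t') (phi t)); lra.
Qed.

Local Open Scope ereal_scope.

Lemma le_min_card (P P' : 'rV[R]_n -> (R -> 'rV[R]_m) -> Prop) :
  (forall x u, Q x -> admissible U u -> P x u -> P' x u) ->
  min_card U Q P' <= min_card U Q P.
Proof.
move=> PP'; apply: le_ereal_inf => _ [k [us [us_adm us_span]] <-]; exists k => //.
exists us; split => // x Qx; have [j Pj] := us_span x Qx; exists j.
exact: PP'.
Qed.

Lemma nbhd_set_le (eps eps' : R) : (eps <= eps')%R ->
  nbhd_set eps Q `<=` nbhd_set eps' Q.
Proof. by move=> ee' y [x Qx xy]; exists x => //; apply: le_trans ee'. Qed.

Definition inv_rate (eps : R) := growth_rate (fun T => r_inv f U T eps Q).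
Definition rec_rate (tau eps : R) := growth_rate (fun T => r_rec f U T eps tau Q).

Lemma inv_rate_nonincreasing : {in `]0%R, +oo[ &, nonincreasing_fun inv_rate}.
Proof.
move=> e e' _ _ ee'; apply: le_growth_rate => T _; apply: le_min_card.
move=> x u _ _ [phi [phi_sol near]]; exists phi; split => // t /near.
exact: nbhd_set_le.
Qed.

Lemma rec_rate_nonincreasing tau : {in `]0%R, +oo[ &, nonincreasing_fun (rec_rate tau)}.
Proof.
move=> e e' _ _ ee'; apply: le_growth_rate => T _; apply: le_min_card.
move=> x u _ _ [phi [phi_sol rec]]; exists phi; split => // t /rec [t' tt' near].
by exists t' => //; exact: nbhd_set_le near.
Qed.

Lemma rec_rate_tau_nonincreasing (eps : R) :
  nonincreasing_fun (fun tau => rec_rate tau eps).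
Proof.
move=> tau tau' tt'; apply: le_growth_rate => T _; apply: le_min_card.
move=> x u _ _ [phi [phi_sol rec]]; exists phi; split => // t /andP[t0 tT].
have [|t'' /andP[tt'' t''t] near] := rec t; first by rewrite t0 (le_trans tT) ?lerB.
by exists t'' => //; rewrite tt'' (le_trans t''t) ?lerD.
Qed.

Lemma rec_rate_le_inv_rate (tau eps : R) : (0 <= tau)%R ->
  rec_rate tau eps <= inv_rate eps.
Proof.
move=> tau0; apply: le_growth_rate => T _; apply: le_min_card.
move=> x u _ _ [phi [phi_sol near]]; exists phi; split => // t /andP[t0 tT].
exists t; first by rewrite lexx lerDl.
by apply: near; rewrite t0 (le_trans tT) ?gerBl.
Qed.

Lemma h_inv_sup : h_inv f U Q = ereal_sup (inv_rate @` `]0%R, +oo[).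
Proof. exact/cvg_lim/nonincreasing_cvg_at_right0/inv_rate_nonincreasing. Qed.

Lemma h_rec_sup tau : h_rec f U tau Q = ereal_sup (rec_rate tau @` `]0%R, +oo[).
Proof. exact/cvg_lim/nonincreasing_cvg_at_right0/rec_rate_nonincreasing. Qed.

Lemma h_rec_nonincreasing :
  {in `]0%R, +oo[ &, nonincreasing_fun (fun tau => h_rec f U tau Q)}.
Proof.
move=> tau tau' _ _ tt'; rewrite !h_rec_sup; apply: ge_ereal_sup => _ [e e0 <-].
apply: le_trans (rec_rate_tau_nonincreasing e _ _ tt') _.
by apply: ereal_sup_ubound; exists e.
Qed.

Lemma h_inv_sup_h_rec :
  h_inv f U Q = ereal_sup ((fun tau => h_rec f U tau Q) @` `]0%R, +oo[).
Proof.
apply/eqP; rewrite eq_le; apply/andP; split.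
  rewrite h_inv_sup; apply: ge_ereal_sup => _ [e + <-]; rewrite /= in_itv /= andbT => e0.
  have e20 : (0 < e / 2)%R by rewrite divr_gt0.
  have [delta delta0 rec_near] := recurrent_stays_near e20.
  apply: (@le_trans _ _ (rec_rate delta (e / 2)%R)).
    rewrite -[X in inv_rate X](divfK (_ : 2%R != 0%R :> R)) // mulrC.
    apply: le_growth_rate => T T0; apply: le_min_card => x u Qx u_adm.
    exact: rec_near.
  apply: (@le_trans _ _ (h_rec f U delta Q)).
    rewrite h_rec_sup; apply: ereal_sup_ubound.
    by exists (e / 2)%R; rewrite /= ?in_itv /= ?e20.
  by apply: ereal_sup_ubound; exists delta; rewrite /= ?in_itv /= ?delta0.
apply: ge_ereal_sup => _ [tau + <-]; rewrite /= in_itv /= andbT => tau0.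
rewrite h_rec_sup h_inv_sup; apply: ge_ereal_sup => _ [e e0 <-].
apply: le_trans (rec_rate_le_inv_rate tau e (ltW tau0)) _.
by apply: ereal_sup_ubound; exists e.
Qed.

End ControlSystem.

Theorem corollary1 (R : realType) (n m : nat)
  (f : 'rV[R]_n -> 'rV[R]_m -> 'rV[R]_n) (U : set 'rV[R]_m) (Q : set 'rV[R]_n) :
  locally_lipschitz f -> compact U -> compact Q ->
  controlled_invariant f U Q ->
  (h_rec f U tau Q @[tau --> 0^'+] --> h_inv f U Q)%E.
Proof.
move=> f_lip U_compact Q_compact _.
rewrite (h_inv_sup_h_rec f_lip U_compact Q_compact).
exact/nonincreasing_cvg_at_right0/h_rec_nonincreasing.
Qed.
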